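(* Let $G$ be a permutation group on a finite set $\Omega$, $|\Omega|=n$, and let $1\le k\le n$. (a) If $G$ is $k$-transitive, then $G$ has the ordered $k$-ut property. (b) If $k\ge 2$ and $G$ has ordered $k$-ut, then $G$ has ordered $(k-1)$-ut. (c) If $k\ge 2$ and $G$ has the $k$-ut property and is generously $(k-1)$-transitive, then $G$ has ordered $k$-ut. (d) If $k\ge2$ and $G$ has ordered $k$-ut, then $G$ is $(k-1)$-transitive. (e) If $k\ge2$ and $G$ has ordered $k$-ut, then $G$ is $(k-1)$-primitive. (f) If $k\ge 2$ and $G$ has ordered $k$-ut, then the stabiliser in $G$ of a point $\alpha$ has ordered $(k-1)$-ut on $\Omega\setminus\{\alpha\}$.
   Context: $G$ has the $k$-ut (universal transversal) property if for every $k$-subset $A\subseteq\Omega$ and every partition $P$ of $\Omega$ into $k$ parts there is $g\in G$ with $Ag$ a transversal of $P$ (meets every part in exactly one point). $G$ has the ordered $k$-ut property if for every $k$-tuple $(a_1,\dots,a_k)$ of distinct points and every ordered partition $(P_1,\dots,P_k)$ of $\Omega$ into $k$ nonempty parts there is $g\in G$ with $a_ig\in P_i$ for all $i$. $G$ is $m$-primitive if it is $m$-transitive and the pointwise stabiliser of any $m-1$ points is primitive on the remaining points (so $1$-primitive means primitive). $G$ is generously $m$-transitive if for every $(m+1)$-subset $M\subseteq\Omega$ the group induced on $M$ by the setwise stabiliser of $M$ is the full symmetric group on $M$. *)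

From mathcomp Require Import all_boot all_fingroup all_solvable.
Set Implicit Arguments. Unset Strict Implicit. Unset Printing Implicit Defensive.
Local Open Scope group_scope.

Definition kut (T : finType) (G : {set {perm T}}) (D : {set T}) (k : nat) :=
  forall A : {set T}, A \subset D -> #|A| = k ->
  forall P : {set {set T}}, partition P D -> #|P| = k ->
  exists2 g, g \in G & forall B, B \in P -> #|[set g x | x in A] :&: B| = 1%N.

Definition ordered_partition (T : finType) (k : nat) (P : 'I_k -> {set T})
  (D : {set T}) :=
  [/\ forall i, P i != set0,
      forall i j, i != j -> [disjoint P i & P j] &
      \bigcup_(i < k) P i = D].

Definition ordered_kut (T : finType) (G : {set {perm T}}) (D : {set T}) (k : nat) :=
  forall a : 'I_k -> T, injective a -> (forall i, a i \in D) ->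
  forall P : 'I_k -> {set T}, ordered_partition P D ->
  exists2 g, g \in G & forall i, g (a i) \in P i.

Definition m_primitive (T : finType) (G : {group {perm T}}) (D : {set T}) (m : nat) :=
  [transitive^m G, on D | 'P] /\
  forall S : {set T}, S \subset D -> #|S| = m.-1 ->
    [primitive 'C_G(S | 'P), on D :\: S | 'P].

Definition generously_transitive (T : finType) (G : {set {perm T}}) (D : {set T}) (m : nat) :=
  forall M : {set T}, M \subset D -> #|M| = m.+1 ->
  forall s : {perm T}, perm_on M s ->
  exists2 g, g \in G & [set g x | x in M] = M /\ {in M, forall x, g x = s x}.

From mathcomp Require Import all_boot all_fingroup all_solvable.
Set Implicit Arguments. Unset Strict Implicit. Unset Printing Implicit Defensive.
Local Open Scope group_scope.

(* Ordered k-ut does not depend on how the k points and the k parts are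
   indexed, so one may add an extra point z that is required to land in an
   extra part Q.  Taking Q = {z} yields ordered (k-1)-ut for the stabiliser of
   z (f), and iterating, for pointwise stabilisers; taking for Q one point split
   off a part of size at least 2 yields (b); taking for Q the complement of a
   target (k-1)-tuple yields (d).  For k = 2 the same device sends two points of
   a nontrivial block one inside and one outside the block, which is impossible,
   so stabilisers of k-2 points are primitive (e).  For (c), the image of the
   k-set is a transversal, and generous transitivity reorders it as required. *)

Section OrderedUniversalTransversals.
Variable T : finType.

Definition indexed_partition (I : finType) (P : I -> {set T}) (D : {set T}) :=
  [/\ forall i, P i != set0,
      forall i j, i != j -> [disjoint P i & P j] &
      \bigcup_i P i = D].

Lemma disjoint_choice_inj (I : finType) (P : I -> {set T}) (b : I -> T) :
  (forall i j, i != j -> [disjoint P i & P j]) -> (forall i, b i \in P i) ->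
  injective b.
Proof.
move=> Pd bP i j bij; apply: contraTeq (bP i) => /Pd/disjointFl/(_ (bP j)).
by rewrite bij => ->.
Qed.

Lemma indexed_partition_inj (I : finType) (P : I -> {set T}) (D : {set T}) :
  indexed_partition P D -> injective P.
Proof.
case=> Pn Pd _ i j Pij; apply: contraTeq (Pn i) => /Pd.
by rewrite negbK -setI_eq0 Pij setIid.
Qed.

Lemma indexed_partition_imset (I : finType) (P : I -> {set T}) (D : {set T}) :
  indexed_partition P D -> partition [set P i | i : I] D.
Proof.
move=> [Pn Pd PU]; apply/and3P; split.
- by rewrite cover_imset PU.
- apply/trivIsetP => _ _ /imsetP[i _ ->] /imsetP[j _ ->] Pij.
  by apply: Pd; apply: contraNneq Pij => ->.
- by apply/imsetP => -[i _ P0]; move: (Pn i); rewrite -P0 eqxx.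
Qed.

Lemma indexed_partition_oapp (I : finType) (P : I -> {set T}) (Q D : {set T}) :
  Q != set0 -> Q \subset D -> indexed_partition P (D :\: Q) ->
  indexed_partition (oapp P Q) D.
Proof.
move=> Qn QD [Pn Pd PU]; have PQ i : P i \subset D :\: Q by rewrite -PU bigcup_sup.
split=> [[i|] //|[i|] [j|] ij|] /=; first exact: Pn.
- by apply: Pd; apply: contra ij => /eqP ->.
- by rewrite disjoints_subset (subset_trans (PQ i)) ?subsetDr.
- by rewrite disjoint_sym disjoints_subset (subset_trans (PQ j)) ?subsetDr.
- by rewrite eqxx in ij.
apply/setP => x; apply/bigcupP/idP => [[[i|] _ /=] | xD].
- by move/(subsetP (PQ i)); rewrite inE => /andP[].
- exact: (subsetP QD).
have [xQ|xQ] := boolP (x \in Q); first by exists None.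
have /bigcupP[i _ xP] : x \in \bigcup_i P i by rewrite PU inE xQ.
by exists (Some i).
Qed.

Lemma indexed_partition_D1 (I : finType) (P : I -> {set T}) (D : {set T}) x i0 :
  indexed_partition P D -> x \in P i0 -> 1 < #|P i0| ->
  indexed_partition (fun i => P i :\ x) (D :\ x).
Proof.
move=> [Pn Pd PU] xP P2.
split=> [i|i j /Pd/(disjointW (subsetDl _ _) (subsetDl _ _))//|].
- have [->|ne] := eqVneq i i0; first by rewrite -card_gt0; rewrite (cardsD1 x) xP in P2.
  have [y yP] := set0Pn _ (Pn i); apply/set0Pn; exists y; rewrite !inE yP andbT.
  by apply: contraTneq yP => ->; rewrite (disjointFl (Pd i i0 ne) xP).
apply/setP => y; rewrite !inE -PU.
apply/bigcupP/andP => [[i _ /setD1P[yx yP]]|[yx /bigcupP[i _ yP]]].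
  by split=> //; apply/bigcupP; exists i.
by exists i; rewrite // !inE yx.
Qed.

Lemma exists_notin_codom (I : finType) (a : I -> T) (D : {set T}) :
  #|I| < #|D| -> exists2 z, z \in D & z \notin codom a.
Proof.
move=> ID; apply/subsetPn; apply: contraTN ID => /subset_leq_card DA.
by rewrite -leqNgt (leq_trans DA) ?leq_image_card.
Qed.

Lemma mktuple_dtuple m (f : 'I_m -> T) (D : {set T}) :
  injective f -> (forall i, f i \in D) -> [tuple f i | i < m] \in m.-dtuple(D).
Proof.
move=> finj fD; apply/dtuple_onP; split=> [i j|i]; rewrite !tnth_mktuple //.
exact: finj.
Qed.

Lemma exists_dtuple m (D : {set T}) : m <= #|D| -> exists t, t \in m.-dtuple(D).
Proof.
move=> mD; exists [tuple enum_val (widen_ord mD i) | i < m].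
apply: mktuple_dtuple; last by move=> i; apply: enum_valP.
move=> i j /enum_val_inj eq_ij; apply: val_inj.
by rewrite -[val i]/(val (widen_ord mD i)) eq_ij.
Qed.

Lemma ordered_kut_indexed (I : finType) (G : {set {perm T}}) (D : {set T}) :
  ordered_kut G D #|I| ->
  forall a : I -> T, injective a -> (forall i, a i \in D) ->
  forall P : I -> {set T}, indexed_partition P D ->
  exists2 g, g \in G & forall i, g (a i) \in P i.
Proof.
move=> hk a ainj aD P [Pn Pd PU].
have [|||g gG gaP] := hk (a \o enum_val) _ _ (P \o enum_val).
- exact: inj_comp ainj enum_val_inj.
- by move=> i; apply: aD.
- split=> [i|i j ij|] /=; first exact: Pn.
    by apply: Pd; apply: contra ij => /eqP/enum_val_inj ->.
  apply/setP => x; rewrite -PU; apply/bigcupP/bigcupP => [[j _ xP]|[i _ xP]].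
    by exists (enum_val j).
  by exists (enum_rank i); rewrite //= enum_rankK.
by exists g => // i; have := gaP (enum_rank i); rewrite /= enum_rankK.
Qed.

Lemma ordered_kutS (G : {set {perm T}}) (D : {set T}) m (a : 'I_m -> T) z
    (P : 'I_m -> {set T}) (Q : {set T}) :
  ordered_kut G D m.+1 -> injective a -> (forall i, a i \in D) ->
  z \in D -> z \notin codom a ->
  Q != set0 -> Q \subset D -> indexed_partition P (D :\: Q) ->
  exists2 g, g \in G & g z \in Q /\ forall i, g (a i) \in P i.
Proof.
have -> : m.+1 = #|{: option 'I_m}| by rewrite card_option card_ord.
move=> hk ainj aD zD za Qn QD partP.
have [||g gG gaP] := ordered_kut_indexed hk (a := oapp a z) _ _
  (indexed_partition_oapp Qn QD partP).
- move=> [i|] [j|] //= => [/ainj -> // | aiz | zaj].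
    by move: za; rewrite -aiz codom_f.
  by move: za; rewrite zaj codom_f.
- by case.
by exists g => //; split=> [|i]; [exact: (gaP None) | exact: (gaP (Some i))].
Qed.

Lemma ordered_kut_stab1 (G : {set {perm T}}) (D : {set T}) z m :
  z \in D -> ordered_kut G D m.+1 -> ordered_kut 'C_G[z | 'P] (D :\ z) m.
Proof.
move=> zD hk a ainj aD P partP.
have aDz i : a i \in D by have := aD i; rewrite inE => /andP[].
have za : z \notin codom a.
  by apply/codomP => -[i zai]; move: (aD i); rewrite -zai setD11.
have [||g gG [gz gaP]] := ordered_kutS hk ainj aDz zD za _ _ partP.
- by apply/set0Pn; exists z; rewrite set11.
- by rewrite sub1set.
by exists g => //; rewrite inE gG; apply/astab1P; apply/set1P.
Qed.

Lemma ordered_kut_stab (G : {set {perm T}}) (D S : {set T}) m :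
  S \subset D -> ordered_kut G D (#|S| + m) ->
  ordered_kut 'C_G(S | 'P) (D :\: S) m.
Proof.
move: {2}#|S| (erefl #|S|) => n; elim: n G D S => [|n IHn] G D S cardS SD hk.
  have S0 : S = set0 by apply: cards0_eq.
  have -> : 'C_G(S | 'P) = G.
    by apply/setIidPl/subsetP => g _; apply/astabP => x; rewrite S0 inE.
  by rewrite S0 setD0; rewrite cardS in hk.
have [z zS] : exists z, z \in S by apply/set0Pn; rewrite -card_gt0 cardS.
rewrite cardS addSn in hk.
have cardSz : #|S :\ z| = n.
  by apply/eqP; rewrite -eqSS -cardS (cardsD1 z S) zS.
rewrite -cardSz in hk.
have := IHn _ _ _ cardSz (setSD _ SD) (ordered_kut_stab1 (subsetP SD z zS) hk).
by rewrite -setIA -astabU setDDl setD1K.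
Qed.

Lemma ordered_kut_pred (G : {set {perm T}}) (D : {set T}) m :
  m < #|D| -> ordered_kut G D m.+1 -> ordered_kut G D m.
Proof.
move=> mD hk a ainj aD P partP.
have [z zD za] : exists2 z, z \in D & z \notin codom a.
  by apply: exists_notin_codom; rewrite card_ord.
have [i0 P2] : exists i0, 1 < #|P i0|.
  apply/existsP; apply: contraLR mD; rewrite negb_exists -leqNgt => /forallP P1.
  rewrite (card_partition (indexed_partition_imset partP)) big_imset /=.
    rewrite -[X in _ <= X](card_ord m) -sum1_card leq_sum // => i _.
    by rewrite leqNgt P1.
  exact: in2W (indexed_partition_inj partP).
have [x xP] : exists x, x \in P i0 by apply/set0Pn; rewrite -card_gt0 ltnW.
have [||g gG [_ gaP]] := ordered_kutS (Q := [set x]) hk ainj aD zD za _ _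
  (indexed_partition_D1 partP xP P2).
- by apply/set0Pn; exists x; rewrite set11.
- by rewrite sub1set; case: partP => _ _ <-; apply/bigcupP; exists i0.
by exists g => // i; have := gaP i; rewrite inE => /andP[].
Qed.

Lemma ordered_kut2_split (G : {set {perm T}}) (D : {set T}) x y (A : {set T}) :
  ordered_kut G D 2 -> x \in D -> y \in D -> x != y ->
  A \subset D -> A != set0 -> D :\: A != set0 ->
  exists2 g, g \in G & g x \in A /\ g y \in D :\: A.
Proof.
move=> hk xD yD xy AD An DAn.
have [||||g gG [gx gy]] := ordered_kutS (a := fun _ : 'I_1 => y)
  (P := fun _ => D :\: A) hk _ _ xD _ An AD _.
- by move=> i j _; rewrite !ord1.
- by [].
- by apply/codomP => -[_ /eqP]; rewrite (negbTE xy).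
- by split=> [//|i j|]; rewrite ?big_ord1 // !ord1 eqxx.
by exists g => //; split; last exact: (gy ord0).
Qed.

Lemma ordered_kut2_transitive (G : {group {perm T}}) (D : {set T}) :
  [acts G, on D | 'P] -> 1 < #|D| -> ordered_kut G D 2 ->
  [transitive G, on D | 'P].
Proof.
move=> GD D2 hk; have [x [y [xD yD xy]]] := card_gt1P D2.
apply/imsetP; exists x => //; apply/eqP; rewrite eqEsubset acts_sub_orbit // xD.
rewrite andbT; apply/subsetP => w wD.
have [u uD uw] : exists2 u, u \in D & u != w.
  by case: (eqVneq x w) => [<-|]; [exists y; rewrite // eq_sym | exists x].
have [|||g gG [/set1P <- _]] := ordered_kut2_split hk xD yD xy (A := [set w]).
- by rewrite sub1set.
- by apply/set0Pn; exists w; rewrite set11.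
- by apply/set0Pn; exists u; rewrite !inE uw.
exact: mem_orbit.
Qed.

Lemma ordered_kut2_primitive (G : {group {perm T}}) (D : {set T}) :
  [acts G, on D | 'P] -> 1 < #|D| -> ordered_kut G D 2 ->
  [primitive G, on D | 'P].
Proof.
move=> GD D2 hk; rewrite /primitive ordered_kut2_transitive //=.
apply/existsP => -[Q /and3P[partQ actQ /andP[Q2 QD]]].
have /and3P[/eqP covQ trivQ nQ0] := partQ.
have [B QB B2] : exists2 B, B \in Q & 1 < #|B|.
  apply/exists_inP; apply: contraLR QD; rewrite -leqNgt => /exists_inPn B1.
  rewrite (card_partition partQ) -sum1_card leq_sum //.
  by move=> B /B1; rewrite -leqNgt.
have BD : B \subset D by rewrite -covQ bigcup_sup.
have [x [y [xB yB xy]]] := card_gt1P B2.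
have [C QC CB] : exists2 C, C \in Q & C != B.
  have [B1 [B2' [QB1 QB2 B12]]] := card_gt1P Q2.
  by case: (eqVneq B1 B) => [e|]; [exists B2'; rewrite // -e eq_sym | exists B1].
have [c cC] : exists c, c \in C by apply/set0Pn; apply: contraNneq nQ0 => <-.
have DBn : D :\: B != set0.
  apply/set0Pn; exists c; rewrite inE -covQ; apply/andP; split.
    by apply/negbT/(disjointFl (trivIsetP trivQ B C QB QC _) cC); rewrite eq_sym.
  by apply/bigcupP; exists C.
have [|g gG [gx gy]] :=
  ordered_kut2_split hk (subsetP BD x xB) (subsetP BD y yB) xy BD _ DBn.
  by apply/set0Pn; exists x.
have gBB : 'P^* B g = B.
  have QgB : 'P^* B g \in Q by rewrite (actsP actQ g gG).
  apply: contraTeq gx => ne.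
  by rewrite (disjointFr (trivIsetP trivQ _ _ QgB QB ne)) //; exact: mem_setact.
by move: gy (mem_setact 'P g yB); rewrite gBB inE => /andP[/negbTE->].
Qed.

Lemma ordered_kut_dtuple_move (G : {set {perm T}}) (D : {set T}) m
    (t1 t2 : m.-tuple T) :
  m < #|D| -> ordered_kut G D m.+1 ->
  t1 \in m.-dtuple(D) -> t2 \in m.-dtuple(D) ->
  exists2 g, g \in G & n_act 'P t1 g = t2.
Proof.
move=> mD hk /dtuple_onP[t1inj t1D] /dtuple_onP[t2inj t2D].
have [z zD zt1] : exists2 z, z \in D & z \notin codom (tnth t1).
  by apply: exists_notin_codom; rewrite card_ord.
have [w wD wt2] : exists2 w, w \in D & w \notin codom (tnth t2).
  by apply: exists_notin_codom; rewrite card_ord.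
pose Q := D :\: [set tnth t2 i | i : 'I_m].
have [||g gG [_ gt]] := ordered_kutS (P := fun i => [set tnth t2 i]) (Q := Q)
  hk t1inj t1D zD zt1 _ (subsetDl _ _) _.
- apply/set0Pn; exists w; rewrite inE wD andbT.
  by apply: contra wt2 => /imsetP[i _ ->]; exact: codom_f.
- split=> [i|i j ij|]; first by apply/set0Pn; exists (tnth t2 i); rewrite set11.
    by rewrite disjoints1 inE (inj_eq t2inj).
  rewrite setDDr setDv set0U; apply/setP => x; rewrite inE andbC.
  apply/bigcupP/andP => [[i _ /set1P ->]|[/imsetP[i _ ->] _]].
    by rewrite imset_f.
  by exists i; rewrite ?set11.
exists g => //; apply: eq_from_tnth => i; rewrite tnth_map.
exact/set1P/gt.
Qed.

Lemma ordered_kut_ntransitive (G : {set {perm T}}) (D : {set T}) m :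
  [acts G, on D | 'P] -> m < #|D| -> ordered_kut G D m.+1 ->
  [transitive^m G, on D | 'P].
Proof.
move=> GD mD hk; have [t0 t0D] := exists_dtuple (ltnW mD).
apply/imsetP; exists t0 => //; apply/setP => t; apply/idP/orbitP.
  by move=> tD; exact: ordered_kut_dtuple_move mD hk t0D tD.
by case=> g gG <-; apply: n_act_dtuple => //; apply: (subsetP GD).
Qed.

Lemma ntransitive_ordered_kut (G : {group {perm T}}) (D : {set T}) k :
  [transitive^k G, on D | 'P] -> ordered_kut G D k.
Proof.
move=> trG a ainj aD P [Pn Pd PU].
have [b bP] := fin_all_exists (fun i => set0Pn _ (Pn i)).
have bD i : b i \in D by rewrite -PU; apply/bigcupP; exists i.
have [g gG gab] := atransP2 trG (mktuple_dtuple ainj aD)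
  (mktuple_dtuple (disjoint_choice_inj Pd bP) bD).
exists g => // i; have := congr1 (fun t => tnth t i) gab.
rewrite /= !tnth_map !tnth_ord_tuple => bi.
by rewrite -[g (a i)]/(aperm (a i) g) -bi.
Qed.

Lemma perm_on_imset_inj (I : finType) (c b : I -> T) :
  injective c -> injective b -> (forall i, b i \in [set c j | j : I]) ->
  exists2 s : {perm T}, perm_on [set c j | j : I] s & forall i, s (c i) = b i.
Proof.
move=> cinj binj bc; pose f x := if [pick i | c i == x] is Some i then b i else x.
have fc i : f (c i) = b i.
  by rewrite /f; case: pickP => [j /eqP/cinj -> // | /(_ i)]; rewrite eqxx.
have fE x : x \notin [set c j | j : I] -> f x = x.
  by move=> xc; rewrite /f; case: pickP => // j /eqP cj; rewrite -cj imset_f in xc.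
have finj : injective f.
  move=> x y; have [/imsetP[i _ ->]|xc] := boolP (x \in [set c j | j : I]);
    have [/imsetP[j _ ->]|yc] := boolP (y \in [set c j | j : I]).
  - by rewrite !fc => /binj ->.
  - by rewrite fc fE // => bi; rewrite -bi bc in yc.
  - by rewrite fc fE // => bj; rewrite bj bc in xc.
  - by rewrite !fE.
exists (perm finj) => [|i]; last by rewrite permE fc.
by apply/subsetP => x; rewrite inE permE; apply: contraR => /fE ->.
Qed.

Lemma kut_generously_ordered_kut (G : {group {perm T}}) k :
  0 < k -> kut G [set: T] k -> generously_transitive G [set: T] k.-1 ->
  ordered_kut G [set: T] k.
Proof.
move=> k0 hk genG a ainj _ P partP; have [_ Pd _] := partP.
have cardA : #|[set a i | i : 'I_k]| = k by rewrite card_imset ?card_ord.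
have cardP : #|[set P i | i : 'I_k]| = k.
  by rewrite card_imset ?card_ord //; exact: indexed_partition_inj partP.
have [g gG gAP] := hk _ (subsetT _) cardA _ (indexed_partition_imset partP) cardP.
have MP i : #|[set g x | x in [set a j | j : 'I_k]] :&: P i| = 1%N.
  by apply: gAP; exact: imset_f.
rewrite -imset_comp in MP; set M := [set _ | _ : 'I_k] in MP.
have MPn i : M :&: P i != set0 by rewrite -card_gt0 MP.
have [b bMP] := fin_all_exists (fun i => set0Pn _ (MPn i)).
have bM i : b i \in M by have /setIP[] := bMP i.
have bP i : b i \in P i by have /setIP[] := bMP i.
have gainj : injective (g \o a) by apply: inj_comp ainj; exact: perm_inj.
have [s sM sgab] := perm_on_imset_inj gainj (disjoint_choice_inj Pd bP) bM.
have cardM : #|M| = k.-1.+1 by rewrite card_imset ?card_ord ?prednK.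
have [h hG [_ hs]] := genG M (subsetT _) cardM s sM.
exists (g * h); first exact: groupM.
by move=> i; rewrite permM -[g (a i)]/((g \o a) i) hs ?imset_f // sgab.
Qed.

End OrderedUniversalTransversals.

Theorem proposition2p1 (T : finType) (G : {group {perm T}}) (k : nat)
    (hk1 : (1 <= k)%N) (hkn : (k <= #|T|)%N) :
  let Omega := [set: T] in
  ([transitive^k G, on Omega | 'P] -> ordered_kut G Omega k) /\
  ((2 <= k)%N -> ordered_kut G Omega k -> ordered_kut G Omega k.-1) /\
  ((2 <= k)%N -> kut G Omega k -> generously_transitive G Omega k.-1 ->
     ordered_kut G Omega k) /\
  ((2 <= k)%N -> ordered_kut G Omega k -> [transitive^k.-1 G, on Omega | 'P]) /\
  ((2 <= k)%N -> ordered_kut G Omega k -> m_primitive G Omega k.-1) /\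
  ((2 <= k)%N -> ordered_kut G Omega k ->
     forall alpha : T, ordered_kut 'C_G[alpha | 'P] (Omega :\ alpha) k.-1).
Proof.
move=> Omega; case: k hk1 hkn => // m _ mT; rewrite -cardsT in mT.
have actsT : [acts G, on Omega | 'P].
  by apply/subsetP => g _; apply/astabsP => x; rewrite !inE.
have transG : ordered_kut G Omega m.+1 -> [transitive^m G, on Omega | 'P].
  exact: ordered_kut_ntransitive.
split; first exact: ntransitive_ordered_kut.
split; first by move=> _; exact: ordered_kut_pred.
split; first by move=> _; apply: kut_generously_ordered_kut.
split; first by move=> _; exact: transG.
split=> m1 hk; last by move=> alpha; apply: ordered_kut_stab1; rewrite ?inE.
split=> [|S _ cardS]; first exact: transG.
have cardCS : 1 < #|Omega :\: S|.
  by rewrite setTD -(ltn_add2l #|S|) cardsC cardS -cardsT addn1 (prednK m1).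
apply: ordered_kut2_primitive cardCS (ordered_kut_stab (subsetT S) _).
- by rewrite setTD astabsC; exact: subset_trans (subsetIr _ _) (astab_sub _ _).
- by rewrite cardS addn2 prednK.
Qed.
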